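(* Fix $\Delta>0$. Suppose that to every $S\in V$ there is assigned a pair $(\mathrm{low}(S),\mathrm{sol}(S))\in\mathbb{R}\times\mathbb{R}^d$ (the output of the subroutine $\mathtt{SubtreeSolver}(S)$) such that $\|\mathrm{sol}(S)\|_0\le k$ for all $S\in V$ and (i) $\mathrm{low}(S)\le F(S)$ for every $S\in V$; (ii) there exists $S\in V^*$ with $P(\mathrm{sol}(S))\le \mathrm{low}(S)+\Delta$. Consider the following best-first search procedure. Initialize a min-priority queue containing only $\emptyset$ with key $\mathrm{low}(\emptyset)$; set $x_{\min}\leftarrow \mathrm{sol}(\emptyset)$ and $P_{\min}\leftarrow P(x_{\min})$. While the queue is nonempty: pop a node $S$ of smallest key (ties broken arbitrarily); if $P(\mathrm{sol}(S))\le \mathrm{low}(S)+\Delta$, return $\mathrm{sol}(S)$ and stop; otherwise, for each child $T$ of $S$ in $G$ (i.e., each $T$ with $(S,T)\in E$): if $\mathrm{low}(T)>P_{\min}$, the node $T$ may either be discarded (pruned) or processed as follows, and if $\mathrm{low}(T)\le P_{\min}$ it must be processed as follows: push $T$ with key $\mathrm{low}(T)$, and if $P(\mathrm{sol}(T))<P_{\min}$ set $x_{\min}\leftarrow\mathrm{sol}(T)$ and $P_{\min}\leftarrow P(x_{\min})$. Then this procedure always halts at the return step, and the returned vector $x$ satisfies $\|x\|_0\le k$ and $P(x)\le P(x^* )+\Delta$.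
   Context: Let $d,k$ be positive integers with $k\le d$, and let $[d]=\{1,\dots,d\}$ with its usual order. For nonempty $S\subseteq[d]$, $\max S$ is its largest element; set $\max\emptyset=0$. For $x\in\mathbb{R}^d$, $\mathrm{supp}(x)=\{i: x_i\neq 0\}$ and $\|x\|_0=|\mathrm{supp}(x)|$. The state-space tree $G=(V,E)$ is defined by $V=\{S\subseteq[d]: |S|\le k \text{ and } k-|S|\le d-\max S\}$, with a directed edge $(S,T)\in E$ for $S,T\in V$ iff $T\neq\emptyset$ and $S=T\setminus\{\max T\}$ (then $T$ is a child of $S$). For $S\in V$, $\mathrm{desc}(S)\subseteq V$ denotes the set consisting of $S$ and all its descendants in $G$, and $U(S)=\{x\in\mathbb{R}^d: \mathrm{supp}(x)\subseteq S' \text{ for some } S'\in\mathrm{desc}(S)\}$. Let $P:\mathbb{R}^d\to\mathbb{R}$ be a function and let $x^*$ be an optimal solution of $\min\{P(x): \|x\|_0\le k\}$ (assumed to exist). Define $F(S)=\inf\{P(x): x\in U(S)\}$ for $S\in V$, and $V^*=\{S\in V: x^*\in U(S)\}$. *)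

From HB Require Import structures.
From mathcomp Require Import all_boot all_order all_algebra.
Set Implicit Arguments.
Unset Strict Implicit.
Unset Printing Implicit Defensive.
Import Order.TTheory GRing.Theory Num.Theory.
Local Open Scope ring_scope.

(* Coordinates [d] = {1,..,d} are represented by 'I_d = {0,..,d-1}:
   ordinal i stands for the integer i+1. *)

Section Tree.
Variables (d k : nat).

(* max S (as an element of {0,..,d}, with max emptyset = 0). *)
Definition maxS (S : {set 'I_d}) : nat := (\max_(i in S) (i : nat).+1)%N.

Definition inV (S : {set 'I_d}) : bool :=
  (#|S| <= k)%N && (k - #|S| <= d - maxS S)%N.

Definition remove_max (T : {set 'I_d}) : {set 'I_d} :=
  T :\: [set i : 'I_d | (i : nat).+1 == maxS T].

Definition edge : rel {set 'I_d} :=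
  fun S T => [&& inV S, inV T, T != set0 & S == remove_max T].

Definition desc (S : {set 'I_d}) : {set {set 'I_d}} := [set T | connect edge S T].

Definition children (S : {set 'I_d}) : {set {set 'I_d}} := [set T | edge S T].
End Tree.

Section Vectors.
Variables (R : realFieldType) (d k : nat).

Definition supp (x : 'rV[R]_d) : {set 'I_d} := [set i | x 0 i != 0].
Definition norm0 (x : 'rV[R]_d) : nat := #|supp x|.

Definition inU (S : {set 'I_d}) (x : 'rV[R]_d) : Prop :=
  exists2 S', S' \in desc k S & supp x \subset S'.

(* a <= F(S) = inf { P x : x \in U(S) }, i.e. a is a lower bound of P on U(S) *)
Definition le_F (P : 'rV[R]_d -> R) (a : R) (S : {set 'I_d}) : Prop :=
  forall x, inU S x -> a <= P x.

Definition inVstar (xstar : 'rV[R]_d) (S : {set 'I_d}) : Prop :=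
  inV k S /\ inU S xstar.

(* Best-first search as a nondeterministic transition system.
   Queue: a multiset (list) of nodes; the key of a node T is low T.
   x_min is stored; P_min is always P x_min. *)
Inductive state :=
| Loop of seq {set 'I_d} & 'rV[R]_d
      (* while-loop test: queue, x_min *)
| Expand of seq {set 'I_d} & 'rV[R]_d & seq {set 'I_d}
      (* processing children: queue, x_min, children still to handle *)
| Done of 'rV[R]_d.

Variables (P : 'rV[R]_d -> R) (Delta : R)
          (low : {set 'I_d} -> R) (sol : {set 'I_d} -> 'rV[R]_d).

Inductive step : state -> state -> Prop :=
| step_return q xm S :
    S \in q -> (forall S', S' \in q -> low S <= low S') ->
    P (sol S) <= low S + Delta ->
    step (Loop q xm) (Done (sol S))
| step_expand q xm S cs :
    S \in q -> (forall S', S' \in q -> low S <= low S') ->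
    ~~ (P (sol S) <= low S + Delta) ->
    perm_eq cs (enum (children k S)) ->
    step (Loop q xm) (Expand (rem S q) xm cs)
| step_prune q xm T cs :
    P xm < low T ->                       (* optional pruning *)
    step (Expand q xm (T :: cs)) (Expand q xm cs)
| step_push q xm T cs :
    step (Expand q xm (T :: cs))
         (Expand (T :: q) (if P (sol T) < P xm then sol T else xm) cs)
| step_endloop q xm :
    step (Expand q xm [::]) (Loop q xm).

Definition init_state : state := Loop [:: set0] (sol set0).

Inductive reachable : state -> Prop :=
| reach_init : reachable init_state
| reach_step s s' : reachable s -> step s s' -> reachable s'.

End Vectors.

From Stdlib Require Import Wf_nat Inclusion.
From HB Require Import structures.
From mathcomp Require Import all_boot all_order all_algebra.
From mathcomp Require Import zify.
Import Order.TTheory GRing.Theory Num.Theory.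
Set Implicit Arguments.
Unset Strict Implicit.
Unset Printing Implicit Defensive.

(* Termination: every step decreases a natural-number measure in which a
   queued node of size s weighs (2^d + 1)^(d + 1 - s), more than all of its
   children together.
   Correctness: the search keeps in its queue (or among the children being
   processed) an ancestor of a node Sgood of V^star at which the return test
   succeeds.  Such an ancestor T has low T <= F(T) <= P xstar, so it is never
   pruned (P_min >= P xstar), and it cannot be the popped node unless it is
   Sgood itself, in which case the search returns; otherwise the pop replaces
   it by one of its children.  Since the popped node S minimizes low, a
   returned sol S satisfies P (sol S) <= low S + Delta <= low T + Delta
   <= P xstar + Delta. *)

Section StateSpaceTree.
Variables (d k : nat).

Lemma remove_maxE (S : {set 'I_d}) : S != set0 ->
  exists2 i, i \in S & maxS S = (i : nat).+1 /\ remove_max S = S :\ i.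
Proof.
move=> S_neq0; rewrite -card_gt0 in S_neq0.
have [i iS maxSi] := eq_bigmax_cond (fun i : 'I_d => (i : nat).+1) S_neq0.
exists i => //; split => //.
rewrite /remove_max /maxS maxSi; congr (_ :\: _).
by apply/setP => j; rewrite !inE eqSS.
Qed.

Lemma inV_set0 : (k <= d)%N -> inV k (set0 : {set 'I_d}).
Proof. by rewrite /inV /maxS big_set0 cards0 !subn0 => ->. Qed.

Lemma edge_card_lt (S T : {set 'I_d}) : edge k S T -> (#|S| < #|T|)%N.
Proof.
case/and4P => _ _ T_neq0 /eqP ->.
have [i iT [_ ->]] := remove_maxE T_neq0.
by rewrite (cardsD1 i T) iT.
Qed.

Lemma inV_remove_max (S : {set 'I_d}) :
  inV k S -> S != set0 -> inV k (remove_max S).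
Proof.
case/andP => cardS maxS_le S_neq0.
have [i iS [maxSi ->]] := remove_maxE S_neq0.
have := cardsD1 i S; rewrite iS => cardSi.
have maxSDi : (maxS (S :\ i) <= i)%N.
  apply/bigmax_leqP => j; rewrite !inE => /andP [ji jS].
  have := @leq_bigmax_cond _ (mem S) (fun j : 'I_d => (j : nat).+1) j jS.
  rewrite -/(maxS S) maxSi ltnS leq_eqVlt => /orP [/eqP/val_inj eq_ji|//].
  by rewrite eq_ji eqxx in ji.
have i_lt_d := ltn_ord i; rewrite maxSi in maxS_le.
by rewrite /inV; apply/andP; split; lia.
Qed.

Lemma connect_set0 (S : {set 'I_d}) : inV k S -> connect (edge k) set0 S.
Proof.
elim: {S}#|S| {-2}S (erefl #|S|) => [|n IHn] S cardS SV.
  by move/eqP: cardS; rewrite cards_eq0 => /eqP ->.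
have S_neq0 : S != set0 by rewrite -card_gt0 cardS.
have [i iS [_ remSi]] := remove_maxE S_neq0.
apply: connect_trans (IHn (remove_max S) _ (inV_remove_max SV S_neq0)) _.
  by move: cardS; rewrite (cardsD1 i S) iS remSi add1n => -[].
by apply: connect1; rewrite /edge inV_remove_max // SV S_neq0 eqxx.
Qed.

Lemma connect_edge_neq (S T : {set 'I_d}) : connect (edge k) S T -> S != T ->
  exists2 U, edge k S U & connect (edge k) U T.
Proof.
case/connectP => -[/= _ ->|U p /= /andP [SU Up] ->]; first by rewrite eqxx.
by exists U => //; apply/connectP; exists p.
Qed.

Lemma inU_connect (R : realFieldType) (S T : {set 'I_d}) (x : 'rV[R]_d) :
  connect (edge k) S T -> inU k T x -> inU k S x.
Proof.
move=> ST [U TU xU]; exists U => //.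
by move: TU; rewrite !inE; exact: connect_trans.
Qed.

Definition weight (S : {set 'I_d}) : nat :=
  (#|{set 'I_d}|.+1 ^ (d.+1 - #|S|))%N.

Definition potential (q : seq {set 'I_d}) : nat := (\sum_(T <- q) weight T)%N.

Lemma potential_cons T q : potential (T :: q) = (weight T + potential q)%N.
Proof. exact: big_cons. Qed.

Lemma potential_rem S q :
  S \in q -> potential q = (weight S + potential (rem S q))%N.
Proof. exact: big_rem. Qed.

Lemma weight_gt0 (S : {set 'I_d}) : (0 < weight S)%N.
Proof. by rewrite expn_gt0. Qed.

Lemma potential_children_lt (S : {set 'I_d}) :
  (\sum_(T in children k S) weight T < weight S)%N.
Proof.
have cardS : (#|S| <= d)%N by rewrite -[d in (_ <= d)%N]card_ord max_card.
have weight_child T : T \in children k S ->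
    (weight T <= #|{set 'I_d}|.+1 ^ (d - #|S|))%N.
  rewrite inE => /edge_card_lt ST.
  by rewrite leq_pexp2l //; lia.
apply: (leq_ltn_trans (leq_sum _ weight_child)).
rewrite sum_nat_const /weight subSn // expnS ltn_pmul2r ?expn_gt0 //.
by rewrite ltnS max_card.
Qed.

End StateSpaceTree.

Section Termination.
Variables (R : realFieldType) (d k : nat) (P : 'rV[R]_d -> R) (Delta : R)
  (low : {set 'I_d} -> R) (sol : {set 'I_d} -> 'rV[R]_d).

Local Notation step := (step k P Delta low sol).

(* Expanding S trades weight S for the children's weights; the factor
   #|{set 'I_d}|.+2 makes this gain exceed the term [size cs + 1] that
   pays for the subsequent pushes and the return to the loop. *)
Definition search_measure (s : state R d) : nat :=
  match s with
  | Loop q _ => #|{set 'I_d}|.+2 * potential q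
  | Expand q _ cs =>
      #|{set 'I_d}|.+2 * (potential q + potential cs) + size cs + 1
  | Done _ => 0
  end.

Lemma step_measure_lt (s s' : state R d) :
  step s s' -> (search_measure s' < search_measure s)%N.
Proof.
case=> [q xm S0 Sq _ _|q xm S0 cs Sq _ _ cs_children|q xm T cs _|q xm T cs|q xm] /=.
- by rewrite (potential_rem Sq) muln_gt0 addn_gt0 weight_gt0.
- have size_cs : (size cs <= #|{set 'I_d}|)%N.
    by rewrite (perm_size cs_children) -cardE max_card.
  have gain : (#|{set 'I_d}|.+2 * (potential cs).+1
               <= #|{set 'I_d}|.+2 * weight S0)%N.
    rewrite leq_mul2l /potential (perm_big _ cs_children) big_enum.
    by rewrite potential_children_lt orbT.
  move: gain size_cs; rewrite (potential_rem Sq) !mulnDr mulnS.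
  (* generalizing unifies occurrences of [size cs] whose implicit type
     arguments differ syntactically, which lia would see as distinct atoms *)
  move: (size cs) => n; lia.
- rewrite potential_cons !mulnDr; move: (size cs) => n; lia.
- rewrite !potential_cons !mulnDr; move: (size cs) => n; lia.
- lia.
Qed.

Lemma step_wf : well_founded (fun s' s => step s s').
Proof.
apply: (wf_incl _ _ _ _ (well_founded_ltof _ search_measure)).
by move=> s' s /step_measure_lt /ssrnat.ltP.
Qed.

End Termination.

Local Open Scope ring_scope.

Section Correctness.
Variables (R : realFieldType) (d k : nat) (P : 'rV[R]_d -> R) (xstar : 'rV[R]_d)
  (Delta : R) (low : {set 'I_d} -> R) (sol : {set 'I_d} -> 'rV[R]_d)
  (Sgood : {set 'I_d}).
Hypotheses (k_le_d : (k <= d)%N)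
  (xstar_min : forall x, (norm0 x <= k)%N -> P xstar <= P x)
  (sol_sparse : forall S, inV k S -> (norm0 (sol S) <= k)%N)
  (low_le_F : forall S, inV k S -> le_F k P (low S) S)
  (Sgood_V : inV k Sgood) (xstar_U : inU k Sgood xstar)
  (Sgood_returns : P (sol Sgood) <= low Sgood + Delta).

Local Notation step := (step k P Delta low sol).
Local Notation ancestor := (connect (edge k) ^~ Sgood).

Lemma low_ancestor_le T : inV k T -> ancestor T -> low T <= P xstar.
Proof. by move=> TV T_anc; apply: low_le_F TV _ (inU_connect T_anc xstar_U). Qed.

Definition live (q : seq {set 'I_d}) (xm : 'rV[R]_d) : Prop :=
  [/\ {subset q <= inV k}, (norm0 xm <= k)%N & has ancestor q].

Definition search_inv (s : state R d) : Prop :=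
  match s with
  | Loop q xm => live q xm
  | Expand q xm cs => live (q ++ cs) xm
  | Done x => (norm0 x <= k)%N /\ P x <= P xstar + Delta
  end.

Lemma live_eq_mem q q' xm : q =i q' -> live q xm -> live q' xm.
Proof.
move=> eq_q [qV xm_sparse q_anc]; split; rewrite -?(eq_has_r eq_q) //.
by move=> T; rewrite -eq_q; apply: qV.
Qed.

Lemma live_return q xm S : S \in q ->
  (forall T, T \in q -> low S <= low T) -> P (sol S) <= low S + Delta ->
  live q xm -> search_inv (Done (sol S)).
Proof.
move=> Sq S_min S_returns [qV _ /hasP [T Tq T_anc]].
split; first exact/sol_sparse/qV.
apply: (le_trans S_returns); rewrite lerD2r.
exact: le_trans (S_min _ Tq) (low_ancestor_le (qV _ Tq) T_anc).
Qed.

Lemma live_expand q xm S cs : S \in q ->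
  ~~ (P (sol S) <= low S + Delta) -> perm_eq cs (enum (children k S)) ->
  live q xm -> live (rem S q ++ cs) xm.
Proof.
move=> Sq S_fails cs_children [qV xm_sparse q_anc].
have cs_edge U : (U \in cs) = edge k S U.
  by rewrite (perm_mem cs_children) mem_enum inE.
split=> //.
  by move=> U; rewrite mem_cat cs_edge => /orP [/mem_rem/qV // | /and4P []].
rewrite has_cat; move: q_anc; rewrite (perm_has _ (perm_to_rem Sq)) /=.
case/orP=> [S_anc | ->]; last by [].
have S_neq : S != Sgood by apply: contraNneq S_fails => ->.
have [U SU U_anc] := connect_edge_neq S_anc S_neq.
by apply/orP; right; apply/hasP; exists U; rewrite ?cs_edge.
Qed.

Lemma live_prune q xm T cs : P xm < low T ->
  live (q ++ T :: cs) xm -> live (q ++ cs) xm.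
Proof.
move=> xm_lt_T [qV xm_sparse q_anc].
have T_not_anc : ~~ ancestor T.
  apply: contraTN xm_lt_T => T_anc; rewrite -leNgt.
  apply: le_trans (low_ancestor_le _ T_anc) (xstar_min xm_sparse).
  by apply: qV; rewrite mem_cat mem_head orbT.
split=> //; last by move: q_anc; rewrite !has_cat /= (negbTE T_not_anc).
move=> U; rewrite mem_cat => U_in; apply: qV.
by rewrite mem_cat inE; case/orP: U_in => ->; rewrite ?orbT.
Qed.

Lemma live_push q xm T cs : live (q ++ T :: cs) xm ->
  live ((T :: q) ++ cs) (if P (sol T) < P xm then sol T else xm).
Proof.
have perm_q : perm_eq (q ++ T :: cs) ((T :: q) ++ cs) by rewrite -cat1s perm_catCA.
move=> /(live_eq_mem (perm_mem perm_q)) [qV xm_sparse q_anc].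
by split=> //; case: ifP => // _; apply/sol_sparse/qV; exact: mem_head.
Qed.

Lemma step_search_inv s s' : search_inv s -> step s s' -> search_inv s'.
Proof.
move=> inv_s st; case: st inv_s => [q xm S|q xm S cs|q xm T cs|q xm T cs|q xm] /=.
- exact: live_return.
- by move=> Sq _; exact: live_expand.
- exact: live_prune.
- exact: live_push.
- by rewrite cats0.
Qed.

Lemma reachable_search_inv s : reachable k P Delta low sol s -> search_inv s.
Proof.
elim=> [|s0 s1 _ inv_s0 /(step_search_inv inv_s0) //].
split; first by move=> T; rewrite inE => /eqP ->; exact: inV_set0.
  exact/sol_sparse/inV_set0.
by rewrite /= orbF connect_set0.
Qed.

Lemma search_inv_progress s : search_inv s -> (forall s', ~ step s s') ->
  exists x, s = Done x.
Proof.
case: s => [q xm|q xm [|T cs]|x] /= inv_s stuck; last by exists x.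
- have [_ _ /hasP [T0 T0q _]] := inv_s.
  have [S Sq S_min] := @arg_minP _ _ _ T0 (mem q) low T0q.
  have [S_returns|S_fails] := boolP (P (sol S) <= low S + Delta).
    by case: (stuck _ (step_return k xm Sq S_min S_returns)).
  by case: (stuck _ (step_expand xm Sq S_min S_fails (perm_refl _))).
- by case: (stuck _ (step_endloop k P Delta low sol q xm)).
- by case: (stuck _ (step_push k P Delta low sol q xm T cs)).
Qed.

End Correctness.

Theorem theorem1 (R : realFieldType) (d k : nat)
  (hk0 : (0 < k)%N) (hkd : (k <= d)%N)
  (P : 'rV[R]_d -> R) (xstar : 'rV[R]_d)
  (hxs : (norm0 xstar <= k)%N)
  (hopt : forall x : 'rV[R]_d, (norm0 x <= k)%N -> P xstar <= P x)
  (Delta : R) (hDelta : 0 < Delta)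
  (low : {set 'I_d} -> R) (sol : {set 'I_d} -> 'rV[R]_d)
  (hsol : forall S, inV k S -> (norm0 (sol S) <= k)%N)
  (hlow : forall S, inV k S -> le_F k P (low S) S)
  (hstar : exists2 S, inVstar k xstar S & P (sol S) <= low S + Delta) :
  Acc (fun s' s => step k P Delta low sol s s') (init_state sol) /\
  (forall s, reachable k P Delta low sol s ->
     (forall s', ~ step k P Delta low sol s s') ->
     exists x, s = Done x /\ (norm0 x <= k)%N /\ P x <= P xstar + Delta).
Proof.
have [Sgood [Sgood_V xstar_U] Sgood_returns] := hstar.
split; first exact: step_wf.
move=> s s_reachable stuck.
have inv_s := reachable_search_inv hkd hopt hsol hlow Sgood_V xstar_U
  Sgood_returns s_reachable.
have [x s_Done] := search_inv_progress inv_s stuck.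
by exists x; rewrite s_Done in inv_s.
Qed.
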